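(* Let $d\ge1$, let $\{1,\dots,d\}$ be partitioned into $\mathcal{D}$ and $\mathcal{U}$, let $\mu\in\mathbb{R}^d$, $s>0$, $\Sigma=s^2I$, $\alpha>0$, $\delta\in(0,1/2]$, $p_\delta=\Phi^{-1}(\delta)$ and $\beta\in(0,1)$. Suppose $$\|\mu_{\mathcal{D}}\|_2\ \ge\ \frac{\beta}{\sqrt{1-\beta^2}}\,\|\mu_{\mathcal{U}}\|_2 .$$ Then, if the problem $$\min_{e\in\mathbb{R}^d}\ \|e\|_2\quad\text{s.t.}\quad \alpha-\mu^\top e-p_\delta\|\Sigma^{1/2}e\|_2\le0$$ is feasible, its optimal solution (the agent's best response with $\ell_2$ cost) is a $\beta$-desirable effort profile.
   Context: $\Phi$ is the standard normal CDF. The constraint is equivalent to $\mathbb{P}_{Z\sim\mathcal{N}(\mu,\Sigma)}[Z^\top e\ge\alpha]\ge1-\delta$, where $Z$ is the agent's Gaussian belief about the vector $\mathbb{C}h$ of total feature contributions, here with all features having the same variance and no correlations. $\mathcal{D}$ is the set of desirable features and $\mathcal{U}$ the undesirable ones; $v_{\mathcal{D}}$ denotes the restriction of a vector $v$ to coordinates in $\mathcal{D}$. An effort profile $e$ is $\beta$-desirable if $\|e_{\mathcal{D}}\|_2\ge\beta\|e\|_2$. *)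

From HB Require Import structures.
From mathcomp Require Import all_boot all_order all_algebra.
From mathcomp Require Import all_classical all_reals all_analysis.
From mathcomp Require Import normal_distribution.
Set Implicit Arguments. Unset Strict Implicit. Unset Printing Implicit Defensive.
Import Order.TTheory GRing.Theory Num.Theory.
Local Open Scope classical_set_scope.
Local Open Scope ring_scope.

Definition Phi {R : realType} (x : R) : R :=
  fine (normal_prob 0 1 `]-oo, x]).

Definition l2norm {R : realType} {d : nat} (e : 'I_d -> R) : R :=
  Num.sqrt (\sum_(i < d) e i ^+ 2).

Definition restr_norm {R : realType} {d : nat} (A : {set 'I_d}) (e : 'I_d -> R) : R :=
  Num.sqrt (\sum_(i in A) e i ^+ 2).

Definition dotp {R : realType} {d : nat} (u v : 'I_d -> R) : R :=
  \sum_(i < d) u i * v i.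

(* Sigma = s^2 I, so Sigma^{1/2} e = s e (s > 0). *)
Definition sqrtSigma_app {R : realType} {d : nat} (s : R) (e : 'I_d -> R) : 'I_d -> R :=
  fun i => s * e i.

Definition feasible {R : realType} {d : nat} (mu : 'I_d -> R) (s alpha p : R)
  (e : 'I_d -> R) : Prop :=
  alpha - dotp mu e - p * l2norm (sqrtSigma_app s e) <= 0.

Definition optimal {R : realType} {d : nat} (mu : 'I_d -> R) (s alpha p : R)
  (e : 'I_d -> R) : Prop :=
  feasible mu s alpha p e /\
  forall e' : 'I_d -> R, feasible mu s alpha p e' -> l2norm e <= l2norm e'.

Definition desirable {R : realType} {d : nat} (beta : R) (D : {set 'I_d})
  (e : 'I_d -> R) : Prop :=
  beta * l2norm e <= restr_norm D e.

From HB Require Import structures.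
From mathcomp Require Import all_boot all_order all_algebra.
From mathcomp Require Import all_classical all_reals all_analysis.
From mathcomp Require Import normal_distribution measurable_realfun.
From mathcomp Require Import lra ring.
Import Order.TTheory GRing.Theory Num.Theory.
Local Open Scope ring_scope.

(* With Sigma = s^2 I the constraint reads alpha <= mu.e + p s |e|, and
   delta <= 1/2 forces p <= 0 because Phi > 1/2 on ]0, +oo[.  By
   Cauchy-Schwarz every feasible e satisfies alpha <= (|mu| + p s) |e|, and a
   minimiser must be tight in Cauchy-Schwarz, hence a multiple of mu.  Scaling
   preserves beta-desirability, and the hypothesis on mu is exactly the
   beta-desirability of mu since |mu|^2 = |mu_D|^2 + |mu_U|^2. *)

Section standard_normal.
Context {R : realType}.
Local Open Scope classical_set_scope.
Local Notation P := (normal_prob (0 : R) 1).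

Lemma normal_pdf01E (x : R) :
  normal_pdf 0 1 x = normal_peak 1 * expR (- x ^+ 2 / 2).
Proof. by rewrite /normal_pdf oner_eq0 /normal_fun subr0 expr1n. Qed.

Lemma normal_prob01_itvcy0 : P `[0, +oo[ = (2^-1)%:E.
Proof.
have even : normal_pdf (0 : R) 1 =1 normal_pdf 0 1 \o -%R.
  by move=> x /=; rewrite !normal_pdf01E sqrrN.
have := ge0_symfun_integralT (normal_pdf_ge0 0 1)
  (@continuous_normal_pdf R 0 1 (oner_neq0 R)) even.
rewrite integral_normal_pdf -set_itvcy -/(P _).
rewrite -(fineK (fin_num_measure P _ _)) //.
by rewrite -EFinM => -[half]; congr _%:E; lra.
Qed.

Lemma normal_prob01_itvcc_gt0 (p : R) : 0 < p -> (0 < P `[0%R, p])%E.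
Proof.
move=> p_gt0.
apply: (@lt_le_trans _ _
  (\int[lebesgue_measure]_(x in `[0%R, p]) (normal_pdf 0 1 p)%:E)%E).
  rewrite integral_cst //= lebesgue_measure_itv /= lte_fin p_gt0 oppr0 addr0.
  rewrite -EFinM lte_fin.
  by rewrite mulr_gt0 // normal_pdf01E mulr_gt0 ?expR_gt0 ?normal_peak_gt0.
apply: ge0_le_integral => //.
- by move=> x _ /=; rewrite lee_fin normal_pdf_ge0.
- by apply/measurable_EFinP/measurable_funTS; exact: measurable_normal_pdf.
- move=> x /=; rewrite in_itv /= => /andP[x_ge0 x_le_p].
  rewrite lee_fin !normal_pdf01E ler_wpM2l ?normal_peak_ge0 // ler_expR.
  by rewrite !mulNr lerN2 ler_pM2r // ler_pXn2r // nnegrE (le_trans x_ge0).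
Qed.

Lemma Phi_gt_half (p : R) : 0 < p -> 2^-1 < Phi p.
Proof.
move=> p_gt0.
have splitU : `]-oo, p] = `]-oo, 0[ `|` `[0, p] :> set R.
  by rewrite -itv_bndbnd_setU // bnd_simp ltW.
have disj : `]-oo, 0[ `&` `[0, p] = set0 :> set R.
  by rewrite -subset0 => x []; rewrite /= !in_itv /= => /lt_geF ->.
have lower_half : P `]-oo, 0[ = (2^-1)%:E.
  rewrite -setCitvr probability_setC //= normal_prob01_itvcy0 -EFinB.
  by congr _%:E; lra.
rewrite /Phi splitU measureU //= lower_half.
rewrite -(fineK (fin_num_measure P `[0, p] _)) // -EFinD /= ltrDl.
by rewrite fine_gt0 // normal_prob01_itvcc_gt0 //= ltey_eq fin_num_measure.
Qed.

End standard_normal.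

Section euclidean.
Context {R : realType} {d : nat}.
Implicit Types (u v : 'I_d -> R) (t : R).

Lemma l2norm_restrT v : l2norm v = restr_norm [set: 'I_d] v.
Proof. by rewrite /restr_norm; under [in RHS]eq_bigl do rewrite inE. Qed.

Lemma restr_norm_ge0 (A : {set 'I_d}) v : 0 <= restr_norm A v.
Proof. exact: sqrtr_ge0. Qed.

Lemma l2norm_ge0 v : 0 <= l2norm v.
Proof. exact: sqrtr_ge0. Qed.

Lemma restr_norm_sqr (A : {set 'I_d}) v :
  restr_norm A v ^+ 2 = \sum_(i in A) v i ^+ 2.
Proof. by rewrite sqr_sqrtr // sumr_ge0 // => i _; exact: sqr_ge0. Qed.

Lemma l2norm_sqr v : l2norm v ^+ 2 = \sum_i v i ^+ 2.
Proof.
by rewrite l2norm_restrT restr_norm_sqr; under eq_bigl do rewrite inE.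
Qed.

Lemma l2norm_sqr_restrC (A : {set 'I_d}) v :
  l2norm v ^+ 2 = restr_norm A v ^+ 2 + restr_norm (~: A) v ^+ 2.
Proof.
rewrite l2norm_sqr !restr_norm_sqr (bigID (mem A)) /=.
by congr (_ + _); apply: eq_bigl => i; rewrite inE.
Qed.

Lemma restr_normZ (A : {set 'I_d}) t v :
  restr_norm A (fun i => t * v i) = `|t| * restr_norm A v.
Proof.
rewrite /restr_norm; under eq_bigr do rewrite exprMn.
by rewrite -mulr_sumr sqrtrM ?sqr_ge0 // sqrtr_sqr.
Qed.

Lemma l2normZ t v : l2norm (fun i => t * v i) = `|t| * l2norm v.
Proof. by rewrite !l2norm_restrT restr_normZ. Qed.

Lemma sumsqr_eq0 v : \sum_i v i ^+ 2 = 0 -> forall i, v i = 0.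
Proof.
move=> sum0 i; apply/eqP; rewrite -sqrf_eq0; apply/eqP.
by apply: (psumr_eq0P _ sum0) => // j _; exact: sqr_ge0.
Qed.

Lemma sumsqr_proj_residual u v :
  \sum_i (l2norm u ^+ 2 * v i - dotp u v * u i) ^+ 2 =
  l2norm u ^+ 2 * (l2norm u ^+ 2 * l2norm v ^+ 2 - dotp u v ^+ 2).
Proof.
set a := l2norm u ^+ 2; set b := dotp u v.
have -> : \sum_i (a * v i - b * u i) ^+ 2 =
    \sum_i (a ^+ 2 * v i ^+ 2 - 2 * a * b * (u i * v i) + b ^+ 2 * u i ^+ 2).
  by apply: eq_bigr => i _; ring.
rewrite big_split sumrB /= -!mulr_sumr -/(dotp u v) -!l2norm_sqr -/a -/b; ring.
Qed.

Lemma dotp_le_l2norm u v : dotp u v <= l2norm u * l2norm v.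
Proof.
have [u0|u_neq0] := eqVneq (l2norm u) 0.
  have /sumsqr_eq0 u_eq0 : \sum_i u i ^+ 2 = 0 by rewrite -l2norm_sqr u0 expr0n.
  by rewrite u0 mul0r /dotp big1 // => i _; rewrite u_eq0 mul0r.
have u_gt0 : 0 < l2norm u by rewrite lt_def u_neq0 l2norm_ge0.
have : 0 <= l2norm u ^+ 2 * (l2norm u ^+ 2 * l2norm v ^+ 2 - dotp u v ^+ 2).
  by rewrite -sumsqr_proj_residual sumr_ge0 // => i _; exact: sqr_ge0.
rewrite pmulr_rge0 ?exprn_gt0 // subr_ge0 -exprMn => sq_le.
apply: le_trans (real_ler_norm _) _; first exact: num_real.
by rewrite -ler_sqr ?nnegrE ?mulr_ge0 ?l2norm_ge0 // real_normK ?num_real.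
Qed.

Lemma dotp_eq_l2norm u v : 0 < l2norm u -> dotp u v = l2norm u * l2norm v ->
  forall i, v i = l2norm v / l2norm u * u i.
Proof.
move=> u_gt0 uv_eq i.
have /sumsqr_eq0/(_ i)/eqP :
    \sum_j (l2norm u ^+ 2 * v j - dotp u v * u j) ^+ 2 = 0.
  by rewrite sumsqr_proj_residual uv_eq exprMn subrr mulr0.
rewrite subr_eq0 uv_eq => /eqP uv_i.
apply: (mulfI (_ : l2norm u ^+ 2 != 0)); first by rewrite expf_neq0 // gt_eqF.
by rewrite uv_i; field; rewrite gt_eqF.
Qed.

End euclidean.

Section desirability.
Context {R : realType} {d : nat}.
Variables (beta : R) (D : {set 'I_d}).

Lemma desirableZ t (v : 'I_d -> R) :
  desirable beta D v -> desirable beta D (fun i => t * v i).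
Proof. by rewrite /desirable l2normZ restr_normZ mulrCA; exact: ler_wpM2l. Qed.

Lemma desirable_restrC_ratio (v : 'I_d -> R) : 0 < beta < 1 ->
  beta / Num.sqrt (1 - beta ^+ 2) * restr_norm (~: D) v <= restr_norm D v ->
  desirable beta D v.
Proof.
case/andP=> beta_gt0 beta_lt1; have beta_ge0 := ltW beta_gt0.
have q_gt0 : 0 < 1 - beta ^+ 2 by rewrite subr_gt0 expr_lt1.
rewrite mulrAC ler_pdivrMr ?sqrtr_gt0 //.
rewrite -ler_sqr ?nnegrE ?mulr_ge0 ?restr_norm_ge0 ?sqrtr_ge0 //.
rewrite !exprMn (sqr_sqrtr (ltW q_gt0)) => sq_le.
rewrite /desirable -ler_sqr ?nnegrE ?mulr_ge0 ?l2norm_ge0 ?restr_norm_ge0 //.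
rewrite exprMn (l2norm_sqr_restrC D); nra.
Qed.

End desirability.

(* The multiple of [mu] on which the constraint is tight. *)
Definition best_response {R : realType} {d : nat} (mu : 'I_d -> R)
    (s alpha p : R) : 'I_d -> R :=
  fun i => alpha / (l2norm mu * (l2norm mu + p * s)) * mu i.

Section best_response.
Context {R : realType} {d : nat} {mu : 'I_d -> R} {s alpha p : R}.
Hypotheses (s_gt0 : 0 < s) (p_le0 : p <= 0) (alpha_gt0 : 0 < alpha).

Lemma feasibleE e :
  feasible mu s alpha p e = (alpha <= dotp mu e + p * s * l2norm e).
Proof.
rewrite /feasible /sqrtSigma_app l2normZ gtr0_norm // mulrA.
by rewrite -addrA -opprD subr_le0.
Qed.

Lemma feasible_le_margin e : feasible mu s alpha p e ->
  alpha <= (l2norm mu + p * s) * l2norm e.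
Proof.
by rewrite feasibleE mulrDl => /le_trans; apply; rewrite lerD2r dotp_le_l2norm.
Qed.

Lemma feasible_margin_gt0 e : feasible mu s alpha p e -> 0 < l2norm mu + p * s.
Proof.
move=> /feasible_le_margin /(lt_le_trans alpha_gt0).
by have := l2norm_ge0 e; nra.
Qed.

Hypothesis margin_gt0 : 0 < l2norm mu + p * s.

Lemma l2norm_mu_gt0 : 0 < l2norm mu.
Proof.
by apply: lt_le_trans margin_gt0 _; rewrite gerDl mulr_le0_ge0 // ltW.
Qed.

Lemma feasible_l2norm_ge e : feasible mu s alpha p e ->
  alpha / (l2norm mu + p * s) <= l2norm e.
Proof. by rewrite ler_pdivrMr // mulrC; exact: feasible_le_margin. Qed.

Lemma l2norm_best_response :
  l2norm (best_response mu s alpha p) = alpha / (l2norm mu + p * s).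
Proof.
have m_gt0 := l2norm_mu_gt0.
rewrite l2normZ gtr0_norm ?divr_gt0 ?mulr_gt0 //; field.
by rewrite !gt_eqF.
Qed.

Lemma feasible_best_response :
  feasible mu s alpha p (best_response mu s alpha p).
Proof.
have m_gt0 := l2norm_mu_gt0.
rewrite feasibleE l2norm_best_response.
have -> : dotp mu (best_response mu s alpha p) =
    alpha / (l2norm mu * (l2norm mu + p * s)) * l2norm mu ^+ 2.
  rewrite l2norm_sqr /dotp mulr_sumr.
  by apply: eq_bigr => i _; rewrite /best_response; ring.
rewrite (_ : _ + _ = alpha) ?lexx //; field.
by rewrite !gt_eqF.
Qed.

Lemma optimal_best_response : optimal mu s alpha p (best_response mu s alpha p).
Proof.
split; first exact: feasible_best_response.
by move=> e fe; rewrite l2norm_best_response feasible_l2norm_ge.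
Qed.

Lemma optimal_parallel e : optimal mu s alpha p e ->
  forall i, e i = l2norm e / l2norm mu * mu i.
Proof.
case=> fe opt; apply: dotp_eq_l2norm; first exact: l2norm_mu_gt0.
have e_eq : l2norm e = alpha / (l2norm mu + p * s).
  apply/le_anti; rewrite feasible_l2norm_ge // andbT -l2norm_best_response.
  exact/opt/feasible_best_response.
have e_margin : (l2norm mu + p * s) * l2norm e = alpha.
  by rewrite e_eq; field; rewrite gt_eqF.
apply/le_anti; rewrite dotp_le_l2norm /=.
by move: fe; rewrite feasibleE; nra.
Qed.

End best_response.

Theorem corollary2 (R : realType) (d : nat) (D : {set 'I_d}) (mu : 'I_d -> R)
    (s alpha delta p beta : R) :
  (0 < d)%N ->
  0 < s ->
  0 < alpha ->
  0 < delta -> delta <= 1 / 2 ->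
  Phi p = delta ->
  0 < beta -> beta < 1 ->
  beta / Num.sqrt (1 - beta ^+ 2) * restr_norm (~: D) mu <= restr_norm D mu ->
  (exists e : 'I_d -> R, feasible mu s alpha p e) ->
  (exists e : 'I_d -> R, optimal mu s alpha p e) /\
  (forall e : 'I_d -> R, optimal mu s alpha p e -> desirable beta D e).
Proof.
move=> _ s_gt0 alpha_gt0 _ delta_le_half Phi_p beta_gt0 beta_lt1 mu_ratio [e0 fe0].
have p_le0 : p <= 0.
  by rewrite leNgt; apply/negP => /Phi_gt_half; rewrite Phi_p; lra.
have margin_gt0 := feasible_margin_gt0 s_gt0 alpha_gt0 _ fe0.
split; first by exists (best_response mu s alpha p); exact: optimal_best_response.
move=> e /(optimal_parallel s_gt0 p_le0 alpha_gt0 margin_gt0) /funext ->.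
by apply/desirableZ/desirable_restrC_ratio => //; apply/andP.
Qed.
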